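(* Let \(\mathcal G\) be an étale topological groupoid, and let \(\mathcal G\) act on its arrow space \(\mathcal G^{(1)}\) from the right by translations. The inverse semigroup of (right) equivariant partial homeomorphisms of \(\mathcal G^{(1)}\) is isomorphic to \(\mathrm{Bis}(\mathcal G)\).
   Context: A bisection of a topological groupoid is an open subset of \(\mathcal G^{(1)}\) on which range and source maps are injective and open. \(\mathcal G\) is étale if bisections cover \(\mathcal G^{(1)}\). \(\mathrm{Bis}(\mathcal G)\) is the inverse semigroup of bisections with \(st=\{gh:g\in s,h\in t\}\) and \(s^*=\{g^{-1}:g\in s\}\). The right translation action of \(\mathcal G\) on \(\mathcal G^{(1)}\) has anchor \(\mathrm s\) and \(h\cdot g=hg\) for \(\mathrm s(h)=\mathrm r(g)\). A partial homeomorphism \(t\colon U\to V\) (a homeomorphism between open subsets) of a right \(\mathcal G\)-space \(X\) is equivariant if \(U\) is \(\mathcal G\)-invariant and \(t(x\cdot g)=t(x)\cdot g\) whenever \(x\in U\) and \(x\cdot g\) is defined. Equivariant partial homeomorphisms form an inverse semigroup under composition and inversion. *)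

From HB Require Import structures.
From mathcomp Require Import all_boot.
From mathcomp Require Import classical_sets boolp topology.
Set Implicit Arguments. Unset Strict Implicit. Unset Printing Implicit Defensive.
Local Open Scope classical_set_scope.

(* A topological groupoid.  Multiplication is a total function [mul] whose
   value is only meaningful on composable pairs (src g = rng h), i.e.
   [mul g h] is the product gh, defined iff s(g) = r(h). *)
Record topGroupoid := TopGroupoid {
  Ob : topologicalType;
  Arr : topologicalType;
  src : Arr -> Ob;
  rng : Arr -> Ob;
  unt : Ob -> Arr;
  mul : Arr -> Arr -> Arr;
  inv : Arr -> Arr;
  src_mul : forall g h, src g = rng h -> src (mul g h) = src h;
  rng_mul : forall g h, src g = rng h -> rng (mul g h) = rng g;
  mulA : forall g h k, src g = rng h -> src h = rng k ->
           mul g (mul h k) = mul (mul g h) k;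
  src_unt : forall x, src (unt x) = x;
  rng_unt : forall x, rng (unt x) = x;
  mul_unt_l : forall g, mul (unt (rng g)) g = g;
  mul_unt_r : forall g, mul g (unt (src g)) = g;
  src_inv : forall g, src (inv g) = rng g;
  rng_inv : forall g, rng (inv g) = src g;
  mul_inv_l : forall g, mul (inv g) g = unt (src g);
  mul_inv_r : forall g, mul g (inv g) = unt (rng g);
  src_cont : continuous src;
  rng_cont : continuous rng;
  unt_cont : continuous unt;
  inv_cont : continuous inv;
  mul_cont : {within [set p : Arr * Arr | src p.1 = rng p.2],
                continuous (fun p => mul p.1 p.2)}
}.

Section Defs.
Variable G : topGroupoid.
Local Notation A := (Arr G).

Definition is_bisection (U : set A) : Prop :=
  open U /\
  {in U &, injective (@rng G)} /\ {in U &, injective (@src G)} /\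
  (forall W : set A, open W -> W `<=` U -> open ((@rng G) @` W)) /\
  (forall W : set A, open W -> W `<=` U -> open ((@src G) @` W)).

Definition etale : Prop :=
  forall g : A, exists U, is_bisection U /\ U g.

Definition bis_mul (U V : set A) : set A :=
  [set x | exists g h, U g /\ V h /\ src g = rng h /\ x = mul g h].
Definition bis_inv (U : set A) : set A := [set x | exists g, U g /\ x = inv g].

(* partial maps on A, represented by their graphs *)
Definition graph_of (U : set A) (t : A -> A) : set (A * A) :=
  [set p | U p.1 /\ p.2 = t p.1].

Definition is_partial_homeo (P : set (A * A)) : Prop :=
  exists (U V : set A) (t t' : A -> A),
    open U /\ open V /\ P = graph_of U t /\
    {within U, continuous t} /\ {within V, continuous t'} /\
    (forall x, U x -> V (t x) /\ t' (t x) = x) /\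
    (forall y, V y -> U (t' y) /\ t (t' y) = y).

Definition is_equivariant_phomeo (P : set (A * A)) : Prop :=
  exists (U V : set A) (t t' : A -> A),
    open U /\ open V /\ P = graph_of U t /\
    {within U, continuous t} /\ {within V, continuous t'} /\
    (forall x, U x -> V (t x) /\ t' (t x) = x) /\
    (forall y, V y -> U (t' y) /\ t (t' y) = y) /\
    (forall x g, U x -> src x = rng g ->
       U (mul x g) /\ src (t x) = rng g /\ t (mul x g) = mul (t x) g).

Definition ph_comp (P Q : set (A * A)) : set (A * A) :=
  [set p | exists y, Q (p.1, y) /\ P (y, p.2)].
Definition ph_inv (P : set (A * A)) : set (A * A) := [set p | P (p.2, p.1)].

End Defs.

From Pilot Require Import Defs.
From mathcomp Require Import all_boot.
From mathcomp Require Import classical_sets boolp topology.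
Local Open Scope classical_set_scope.

(* A bisection U acts on arrows by left multiplication, x |-> g x for the
   unique g in U with s(g) = r(x).  Left and right multiplication commute, so
   this is a right-equivariant partial homeomorphism, inverted by the action of
   U^-1, and products and inverses of bisections match composition and
   inversion of these maps.  Conversely, an equivariant t is determined by its
   values on units, t(x) = t(1_r(x)) x, so it is the action of the set of the
   t(1_u); this set is open because t^-1 is continuous and the units of an
   etale groupoid are open, and s, r are injective on it by equivariance. *)

Lemma open_locally (T : topologicalType) (S : set T) :
  (forall x, S x -> exists N, open N /\ N x /\ N `<=` S) -> open S.
Proof.
move=> loc; rewrite openE => x /loc [N [oN [Nx NS]]].
by apply: (filterS NS); exact: open_nbhs_nbhs.
Qed.

Lemma open_image_local (S T : topologicalType) (h : S -> T) (W : set S) :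
  open W ->
  (forall w, W w -> exists2 E, open E /\ E w &
     forall W', open W' -> W' `<=` E -> open (h @` W')) ->
  open (h @` W).
Proof.
move=> oW loc; apply: open_locally => _ [w Ww <-].
have [E [oE Ew] hE] := loc w Ww.
exists (h @` (W `&` E)); split; first by apply: hE; [exact: openI | exact: subIsetr].
by split; [exists w | apply: image_subset; exact: subIsetl].
Qed.

Section Groupoid.
Variable G : topGroupoid.
Local Notation A := (Arr G).
Local Notation mul := (@Defs.mul G).
Local Notation inv := (@Defs.inv G).
Local Notation unt := (@Defs.unt G).
Local Notation src := (@Defs.src G).
Local Notation rng := (@Defs.rng G).

Lemma mulKg (g x : A) : src g = rng x -> mul (inv g) (mul g x) = x.
Proof. by move=> gx; rewrite mulA ?src_inv // mul_inv_l gx mul_unt_l. Qed.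

Lemma mulKVg (g x : A) : rng g = rng x -> mul g (mul (inv g) x) = x.
Proof. by move=> gx; rewrite mulA ?rng_inv ?src_inv // mul_inv_r gx mul_unt_l. Qed.

Lemma invK (g : A) : inv (inv g) = g.
Proof.
rewrite -{2}(@mulKg (inv g) g (src_inv g)) mul_inv_l.
by rewrite -(rng_inv g) -src_inv mul_unt_r.
Qed.

Lemma open_preimage_rng (X : set (Ob G)) : open X -> open (rng @^-1` X).
Proof. exact: (continuousP _).1 (@rng_cont G) X. Qed.

Lemma open_preimage_inv (X : set A) : open X -> open (inv @^-1` X).
Proof. exact: (continuousP _).1 (@inv_cont G) X. Qed.

Lemma bis_invE (U : set A) : bis_inv U = inv @^-1` U.
Proof.
apply/seteqP; split => x /=; first by case=> g [Ug ->]; rewrite invK.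
by move=> Uix; exists (inv x); rewrite invK.
Qed.

Lemma bis_invK (U : set A) : bis_inv (bis_inv U) = U.
Proof. by rewrite !bis_invE; apply/seteqP; split => x /=; rewrite invK. Qed.

Lemma image_src_inv (W : set A) : src @` (inv @^-1` W) = rng @` W.
Proof.
by apply/seteqP; split => _ [g Wg <-]; exists (inv g); rewrite //= ?invK ?src_inv ?rng_inv.
Qed.

Lemma image_rng_inv (W : set A) : rng @` (inv @^-1` W) = src @` W.
Proof.
by apply/seteqP; split => _ [g Wg <-]; exists (inv g); rewrite //= ?invK ?src_inv ?rng_inv.
Qed.

Lemma bisection_inv {U : set A} : is_bisection U -> is_bisection (bis_inv U).
Proof.
move=> [oU [rU [sU [roU soU]]]]; rewrite bis_invE.
have preW W : W `<=` inv @^-1` U -> inv @^-1` W `<=` U.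
  by move=> WU x /WU; rewrite /= invK.
split; first exact: open_preimage_inv.
split.
  move=> a b; rewrite !inE => Ua Ub; rewrite -!src_inv.
  by move/(sU _ _ (mem_set Ua) (mem_set Ub))/(congr1 inv); rewrite !invK.
split.
  move=> a b; rewrite !inE => Ua Ub; rewrite -!rng_inv.
  by move/(rU _ _ (mem_set Ua) (mem_set Ub))/(congr1 inv); rewrite !invK.
split=> W oW /preW WU.
  by rewrite -image_src_inv; apply: soU => //; exact: open_preimage_inv.
by rewrite -image_rng_inv; apply: roU => //; exact: open_preimage_inv.
Qed.

Lemma mul_preimage_open_nbhs {X : set A} {g x : A} :
  open X -> src g = rng x -> X (mul g x) ->
  exists N1 N2, open N1 /\ open N2 /\ N1 g /\ N2 x /\
    forall g' x', N1 g' -> N2 x' -> src g' = rng x' -> X (mul g' x').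
Proof.
move=> oX gx Xgx.
have : within [set p : A * A | src p.1 = rng p.2] (nbhs (g, x))
    ((fun p : A * A => mul p.1 p.2) @^-1` X).
  rewrite (@nbhs_subspace_in _ _ (g, x) gx).
  exact: (@mul_cont G (g, x) X) (open_nbhs_nbhs (conj oX Xgx)).
rewrite /within /= => -[[Q R] [/= Qg Rx] QR].
move: Qg Rx; rewrite !nbhsE => -[N1 [o1 N1g] N1Q] [N2 [o2 N2x] N2R].
exists N1, N2; do 4!split => //.
by move=> g' x' N1g' N2x'; apply: (QR (g', x')); split; [exact: N1Q | exact: N2R].
Qed.

Section Etale.
Hypothesis etaleG : etale G.

Lemma etale_open_rng (W : set A) : open W -> open (rng @` W).
Proof.
move=> oW; apply: open_image_local => // w _.
by have [E [[oE [_ [_ [rE _]]]] Ew]] := etaleG w; exists E.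
Qed.

Lemma etale_open_src (W : set A) : open W -> open (src @` W).
Proof.
move=> oW; apply: open_image_local => // w _.
by have [E [[oE [_ [_ [_ sE]]]] Ew]] := etaleG w; exists E.
Qed.

Lemma etale_open_units : open (range unt).
Proof.
apply: open_locally => _ [u _ <-].
have [E [[oE [rE _]] Eu]] := etaleG (unt u).
exists (E `&` (fun g => unt (rng g)) @^-1` E); split.
  apply: openI => //; apply: (continuousP _).1 => //.
  by move=> g; apply: continuous_comp; [exact: rng_cont | exact: unt_cont].
split; first by rewrite /= rng_unt.
move=> g [Eg Eug]; exists (rng g) => //.
by apply: rE; rewrite ?inE ?rng_unt.
Qed.

End Etale.
Definition ltransl (U : set A) : set (A * A) :=
  [set p | exists g, U g /\ src g = rng p.1 /\ p.2 = mul g p.1].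

Lemma ltransl_inj (U V : set A) : ltransl U = ltransl V -> U = V.
Proof.
have sub U' V' : ltransl U' = ltransl V' -> U' `<=` V'.
  move=> E g Ug; have : ltransl V' (unt (src g), g).
    by rewrite -E; exists g; rewrite /= rng_unt mul_unt_r.
  by case=> h [Vh [/= hg ->]]; rewrite rng_unt in hg; rewrite -hg mul_unt_r.
by move=> E; apply/seteqP; split; [exact: sub E | exact: sub (esym E)].
Qed.

Lemma ltransl_mul (U V : set A) :
  ltransl (bis_mul U V) = ph_comp (ltransl U) (ltransl V).
Proof.
apply/seteqP; split => -[x z] /=.
  case=> _ [[g [h [Ug [Vh [gh ->]]]]] [/= ghx ->]].
  rewrite src_mul // in ghx.
  exists (mul h x); split; first by exists h.
  by exists g; rewrite /= rng_mul // mulA.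
case=> y [[h [Vh [/= hx ->]]] [g [Ug [/= ghx ->]]]].
rewrite rng_mul // in ghx.
by exists (mul g h); rewrite /= src_mul // mulA //; split => //; exists g, h.
Qed.

Lemma ltransl_inv (U : set A) : ltransl (bis_inv U) = ph_inv (ltransl U).
Proof.
apply/seteqP; split => -[x y] /=.
  case=> _ [[g [Ug ->]] [/= gx ->]]; rewrite src_inv in gx.
  by exists g; rewrite /= rng_mul ?rng_inv ?src_inv // mulKVg.
case=> g [Ug [/= gy ->]].
by exists (inv g); rewrite /= src_inv rng_mul // mulKg //; split => //; exists g.
Qed.

(* Off [bis_lmul_dom U] the default [unt u] is a junk value. *)
Definition bis_src_sect (U : set A) (u : Ob G) : A :=
  xget (unt u) [set g | U g /\ src g = u].

Definition bis_lmul (U : set A) (x : A) : A := mul (bis_src_sect U (rng x)) x.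

Definition bis_lmul_dom (U : set A) : set A := rng @^-1` (src @` U).

Lemma bis_lmulE {U : set A} {x g : A} : {in U &, injective src} ->
  U g -> src g = rng x -> bis_lmul U x = mul g x.
Proof.
move=> sU Ug gx; rewrite /bis_lmul /bis_src_sect -gx (@xget_unique _ _ _ g) // => h [Uh hg].
by apply: sU; rewrite ?inE.
Qed.

Section Translation.
Variable U : set A.
Hypothesis bisU : is_bisection U.

Let oU : open U := bisU.1.
Let sU : {in U &, injective src} := bisU.2.2.1.
Let src_openU : forall W, open W -> W `<=` U -> open (src @` W) := bisU.2.2.2.2.

Lemma ltranslE : ltransl U = graph_of (bis_lmul_dom U) (bis_lmul U).
Proof.
apply/seteqP; split => -[x y] /=.
  by case=> g [Ug [/= gx ->]]; split; [exists g | rewrite (bis_lmulE sU Ug gx)].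
by case=> -[g Ug gx] /= ->; exists g; rewrite (bis_lmulE sU Ug gx).
Qed.

Lemma open_bis_lmul_dom : open (bis_lmul_dom U).
Proof. by apply: open_preimage_rng; exact: src_openU. Qed.

Lemma open_bis_lmul_preimage (X : set A) :
  open X -> open (bis_lmul_dom U `&` bis_lmul U @^-1` X).
Proof.
move=> oX; apply: open_locally => x [[g Ug gx]]; rewrite /= (bis_lmulE sU Ug gx) => Xgx.
have [N1 [N2 [oN1 [oN2 [N1g [N2x NX]]]]]] := mul_preimage_open_nbhs oX gx Xgx.
exists (N2 `&` bis_lmul_dom (N1 `&` U)); split.
  apply: openI => //; apply: open_preimage_rng.
  by apply: src_openU; [exact: openI | exact: subIsetr].
split; first by split => //; exists g.
move=> x' [N2x' [g' [N1g' Ug'] g'x']]; split; first by exists g'.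
by rewrite /= (bis_lmulE sU Ug' g'x'); exact: NX.
Qed.

Lemma bis_lmul_cont : {within bis_lmul_dom U, continuous (bis_lmul U)}.
Proof.
rewrite continuous_open_subspace; last exact: open_bis_lmul_dom.
apply/continuous_inP; [exact: open_bis_lmul_dom | exact: open_bis_lmul_preimage].
Qed.

Lemma bis_lmulK (x : A) : bis_lmul_dom U x ->
  bis_lmul_dom (bis_inv U) (bis_lmul U x) /\ bis_lmul (bis_inv U) (bis_lmul U x) = x.
Proof.
case=> g Ug gx; rewrite (bis_lmulE sU Ug gx).
have Uig : bis_inv U (inv g) by exists g.
have igx : src (inv g) = rng (mul g x) by rewrite src_inv rng_mul.
split; first by exists (inv g).
by rewrite (bis_lmulE (bisection_inv bisU).2.2.1 Uig igx) mulKg.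
Qed.

Lemma bis_lmul_equivariant (x h : A) : bis_lmul_dom U x -> src x = rng h ->
  bis_lmul_dom U (mul x h) /\ src (bis_lmul U x) = rng h /\
  bis_lmul U (mul x h) = mul (bis_lmul U x) h.
Proof.
case=> g Ug gx xh; have gxh : src g = rng (mul x h) by rewrite rng_mul.
rewrite (bis_lmulE sU Ug gx) (bis_lmulE sU Ug gxh) src_mul // mulA //.
by split=> //; exists g.
Qed.

End Translation.

Lemma ltransl_equivariant (U : set A) :
  is_bisection U -> is_equivariant_phomeo (ltransl U).
Proof.
move=> bisU; have bisU' := bisection_inv bisU.
exists (bis_lmul_dom U), (bis_lmul_dom (bis_inv U)), (bis_lmul U), (bis_lmul (bis_inv U)).
do 2 (split; first exact: open_bis_lmul_dom).
split; first exact: ltranslE.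
do 2 (split; first exact: bis_lmul_cont).
split; first exact: bis_lmulK.
split; last exact: bis_lmul_equivariant.
by move=> y; have := @bis_lmulK _ bisU' y; rewrite bis_invK.
Qed.

Section EquivariantToBisection.
Hypothesis etaleG : etale G.
Variables (D V : set A) (t t' : A -> A).
Hypotheses (oD : open D) (oV : open V) (ct' : {within V, continuous t'}).
Hypothesis tK : forall {x}, D x -> V (t x) /\ t' (t x) = x.
Hypothesis t'K : forall {y}, V y -> D (t' y) /\ t (t' y) = y.
Hypothesis t_equivariant : forall {x g}, D x -> src x = rng g ->
  D (mul x g) /\ src (t x) = rng g /\ t (mul x g) = mul (t x) g.

Definition bis_of_phomeo : set A := t @` (D `&` range unt).

Lemma dom_unt_rng {x : A} : D x -> D (unt (rng x)).
Proof.
move=> Dx; have [+ _] := t_equivariant Dx (esym (rng_inv x)).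
by rewrite mul_inv_r.
Qed.

Lemma src_t_unt (u : Ob G) : D (unt u) -> src (t (unt u)) = u.
Proof.
move=> Du; have [_ [-> _]] := t_equivariant Du (etrans (src_unt u) (esym (rng_unt u))).
exact: rng_unt.
Qed.

Lemma t_unt_mul (x : A) : D x -> t x = mul (t (unt (rng x))) x.
Proof.
move=> Dx; have [_ [_ +]] := t_equivariant (dom_unt_rng Dx) (src_unt (rng x)).
by rewrite mul_unt_l.
Qed.

Lemma bis_of_phomeoE : bis_of_phomeo = V `&` t' @^-1` (D `&` range unt).
Proof.
apply/seteqP; split => y.
  by case=> x [Dx ux] <-; have [Vtx t'tx] := tK Dx; rewrite /= t'tx.
by case=> Vy Dt'y; exists (t' y) => //; exact: (t'K Vy).2.
Qed.

Lemma open_bis_of_phomeo : open bis_of_phomeo.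
Proof.
rewrite bis_of_phomeoE; apply: (continuous_inP _ oV).1.
  by rewrite -continuous_open_subspace.
by apply: openI => //; exact: etale_open_units.
Qed.

Lemma bis_of_phomeo_src_inj : {in bis_of_phomeo &, injective src}.
Proof.
move=> b c; rewrite !inE => -[x [Dy [y _ yx]] <-] [x' [Dz [z _ zx']] <-].
by subst x x'; rewrite !src_t_unt // => ->.
Qed.

(* For [b = t (unt y)] and [c = t (unt z)] with [rng b = rng c], equivariance
   gives [t (inv b * c) = c = t (unt z)], hence [inv b * c = unt z]. *)
Lemma bis_of_phomeo_rng_inj : {in bis_of_phomeo &, injective rng}.
Proof.
move=> b c; rewrite !inE => -[x [Dy [y _ yx]] <-] [x' [Dz [z _ zx']] <-] bc.
subst x x'.
pose w := mul (inv (t (unt y))) (t (unt z)).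
have rw : rng w = y by rewrite /w rng_mul ?rng_inv ?src_t_unt // src_inv.
have [Dw [_ tw]] := t_equivariant Dy (etrans (src_unt y) (esym rw)).
have uw : mul (unt y) w = w by rewrite -{1}rw mul_unt_l.
have twz : t w = t (unt z) by rewrite -{1}uw tw /w mulKVg.
rewrite uw in Dw.
have wz : w = unt z by rewrite -(tK Dw).2 twz (tK Dz).2.
by rewrite -rw wz rng_unt.
Qed.

Lemma bisection_bis_of_phomeo : is_bisection bis_of_phomeo.
Proof.
split; first exact: open_bis_of_phomeo.
split; first exact: bis_of_phomeo_rng_inj.
split; first exact: bis_of_phomeo_src_inj.
by split=> W oW _; [exact: etale_open_rng | exact: etale_open_src].
Qed.

Lemma ltransl_bis_of_phomeo : ltransl bis_of_phomeo = graph_of D t.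
Proof.
apply/seteqP; split => -[x y] /=.
  case=> b [[x0 [Du [u _ ux0]] tb] [/= ux ->]]; subst x0 b.
  rewrite src_t_unt // in ux; rewrite ux in Du *.
  have [Dx [_ tx]] := t_equivariant Du (src_unt (rng x)).
  by rewrite mul_unt_l in Dx tx; split => //=; rewrite tx.
rewrite /graph_of /= => -[Dx ->]; have Dux := dom_unt_rng Dx.
exists (t (unt (rng x))); split; first by exists (unt (rng x)).
by rewrite /= src_t_unt // -t_unt_mul.
Qed.

End EquivariantToBisection.

Lemma equivariant_phomeo_ltransl (P : set (A * A)) : etale G ->
  is_equivariant_phomeo P -> exists U, is_bisection U /\ ltransl U = P.
Proof.
move=> etaleG [D [V [t [t' [oD [oV [-> [_ [ct' [tK [t'K t_eqv]]]]]]]]]]].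
exists (bis_of_phomeo D t); split.
  exact: bisection_bis_of_phomeo etaleG D V t t' oD oV ct' tK t'K t_eqv.
exact: ltransl_bis_of_phomeo t_eqv.
Qed.

End Groupoid.

Theorem lemma4p10 (G : topGroupoid) (HG : etale G) :
  exists phi : set (Arr G) -> set (Arr G * Arr G),
    (forall U, is_bisection U -> is_equivariant_phomeo (phi U)) /\
    (forall U V, is_bisection U -> is_bisection V -> phi U = phi V -> U = V) /\
    (forall P, is_equivariant_phomeo P -> exists U, is_bisection U /\ phi U = P) /\
    (forall U V, is_bisection U -> is_bisection V ->
       phi (bis_mul U V) = ph_comp (phi U) (phi V)) /\
    (forall U, is_bisection U -> phi (bis_inv U) = ph_inv (phi U)).
Proof.
exists (ltransl G); split; first exact: ltransl_equivariant.
split; first by move=> U V _ _; exact: ltransl_inj.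
split; first by move=> P; exact: equivariant_phomeo_ltransl.
split; first by move=> U V _ _; exact: ltransl_mul.
by move=> U _; exact: ltransl_inv.
Qed.
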